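(* Let $Z$ be an $n\times k$ matrix and $\varepsilon\in\mathbb R^n$ such that $Z'D_\varepsilon^2Z$ is invertible, and set $V=Z(Z'D_\varepsilon^2Z)^{-1}Z'$ and $P=D_\varepsilon VD_\varepsilon$. Then for every $i=1,\dots,n$, $$V_{ii}-3V_{ii}P_{ii}+4V_{ii}P_{ii}^2-2\sum_{j=1}^nV_{ij}^2\varepsilon_j^2P_{ij}^2\;\ge\;V_{ii}(1-P_{ii})(1-2P_{ii})^2.$$
   Context: $D_\varepsilon$ is the diagonal matrix with diagonal $\varepsilon$ and $D_\varepsilon^2=D_\varepsilon D_\varepsilon$; $V_{ij}$ and $P_{ij}$ denote entries of $V$ and $P$. *)

From mathcomp Require Import all_boot all_order all_algebra.
Set Implicit Arguments. Unset Strict Implicit. Unset Printing Implicit Defensive.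
Import Order.TTheory GRing.Theory Num.Theory.
Local Open Scope ring_scope.

Definition Deps (R : pzRingType) (n : nat) (eps : 'I_n -> R) : 'M[R]_n :=
  diag_mx (\row_j eps j).

From mathcomp Require Import all_boot all_order all_algebra.
From mathcomp Require Import ring lra.
Set Implicit Arguments. Unset Strict Implicit.
Import Order.TTheory GRing.Theory Num.Theory.
Local Open Scope ring_scope.

(* Both V and P are symmetric, and P is idempotent, so row i of P satisfies
   P_ii = \sum_j P_ij^2; hence \sum_{j <> i} P_ij^4 <= (P_ii - P_ii^2)^2.
   Since eps_i^2 V_ij^2 eps_j^2 = P_ij^2, multiplying the claim by eps_i^2
   turns it into a polynomial inequality in P_ii and \sum_j P_ij^4, whose
   two sides differ by 2 ((P_ii - P_ii^2)^2 - \sum_{j <> i} P_ij^4). *)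

Lemma sum_sqr_le_sqr_sum (R : realDomainType) (I : Type) (r : seq I) (F : I -> R) :
  (forall j, 0 <= F j) -> \sum_(j <- r) F j ^+ 2 <= (\sum_(j <- r) F j) ^+ 2.
Proof.
move=> F_ge0; elim: r => [|x r IHr]; first by rewrite !big_nil expr0n.
rewrite !big_cons.
have : 0 <= \sum_(j <- r) F j by exact: sumr_ge0.
have := F_ge0 x; nra.
Qed.

Section SymmetricIdempotent.

Variables (R : realDomainType) (n : nat) (P : 'M[R]_n).
Hypotheses (P_sym : P^T = P) (P_idem : P *m P = P).

Lemma sym_idem_row_sqr_sum (i : 'I_n) : \sum_(j < n) P i j ^+ 2 = P i i.
Proof.
rewrite -{2}P_idem mxE; apply: eq_bigr => j _.
by rewrite expr2 -{2}P_sym mxE.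
Qed.

Lemma sym_idem_row_quartic_sum_le (i : 'I_n) :
  \sum_(j < n) P i j ^+ 4 <= P i i ^+ 4 + (P i i - P i i ^+ 2) ^+ 2.
Proof.
have off_diag : \sum_(j < n | j != i) P i j ^+ 2 = P i i - P i i ^+ 2.
  have := sym_idem_row_sqr_sum i; rewrite (bigD1 i) //= => row.
  by rewrite -{1}row addrC addrK.
rewrite (bigD1 i) //= lerD2l -off_diag.
rewrite [leLHS]big_mkcond [in leRHS]big_mkcond /=.
rewrite (eq_bigr (fun j => (if j != i then P i j ^+ 2 else 0) ^+ 2)) => [|j _].
  by apply: sum_sqr_le_sqr_sum => j; case: ifP => _ //; exact: sqr_ge0.
by case: ifP => _; rewrite ?expr0n // -exprM.
Qed.

End SymmetricIdempotent.

Lemma tr_Deps (R : pzRingType) (n : nat) (eps : 'I_n -> R) :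
  (Deps eps)^T = Deps eps.
Proof. exact: tr_diag_mx. Qed.

Lemma Deps_conj_mxE (R : pzRingType) (n : nat) (eps : 'I_n -> R) (A : 'M[R]_n) a b :
  (Deps eps *m A *m Deps eps) a b = eps a * A a b * eps b.
Proof. by rewrite mul_mx_diag mul_diag_mx !mxE. Qed.

Section HatMatrix.

Variables (R : comUnitRingType) (n k : nat) (Z : 'M[R]_(n, k)) (eps : 'I_n -> R).

Local Notation D := (Deps eps).
Local Notation G := (Z^T *m (D *m D) *m Z).
Local Notation V := (Z *m invmx G *m Z^T).
Local Notation P := (D *m V *m D).

Lemma tr_gram : G^T = G.
Proof. by rewrite !trmx_mul tr_Deps trmxK mulmxA. Qed.

Lemma tr_hat : V^T = V.
Proof. by rewrite !trmx_mul trmxK trmx_inv tr_gram mulmxA. Qed.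

Lemma tr_weighted_hat : P^T = P.
Proof. by rewrite trmx_mul [(_ *m _)^T]trmx_mul tr_hat tr_Deps mulmxA. Qed.

Lemma weighted_hat_idem : G \in unitmx -> P *m P = P.
Proof.
move=> G_unit.
have -> : P *m P = D *m Z *m (invmx G *m G) *m invmx G *m Z^T *m D.
  by rewrite !mulmxA.
by rewrite mulVmx // mulmx1 !mulmxA.
Qed.

End HatMatrix.

Lemma le_leverage_poly (R : realDomainType) (e v p s q : R) :
  0 < e -> e * v = p -> e * s = q -> q <= p ^+ 4 + (p - p ^+ 2) ^+ 2 ->
  v * (1 - p) * (1 - 2 * p) ^+ 2 <= v - 3 * v * p + 4 * v * p ^+ 2 - 2 * s.
Proof.
move=> e_gt0 eV eS q_le; rewrite -(ler_pM2l e_gt0).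
have -> : e * (v * (1 - p) * (1 - 2 * p) ^+ 2) = p * (1 - p) * (1 - 2 * p) ^+ 2.
  by rewrite -eV; ring.
have -> : e * (v - 3 * v * p + 4 * v * p ^+ 2 - 2 * s)
    = p - 3 * p * p + 4 * p * p ^+ 2 - 2 * q.
  by rewrite -eV -eS; ring.
nra.
Qed.

Theorem mainTheorem11 (R : realFieldType) (n k : nat)
  (Z : 'M[R]_(n, k)) (eps : 'I_n -> R)
  (hinv : Z^T *m (Deps eps *m Deps eps) *m Z \in unitmx) :
  let V := Z *m invmx (Z^T *m (Deps eps *m Deps eps) *m Z) *m Z^T in
  let P := Deps eps *m V *m Deps eps in
  forall i : 'I_n,
    V i i - 3 * V i i * P i i + 4 * V i i * P i i ^+ 2
      - 2 * \sum_(j < n) V i j ^+ 2 * eps j ^+ 2 * P i j ^+ 2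
    >= V i i * (1 - P i i) * (1 - 2 * P i i) ^+ 2.
Proof.
move=> V P i.
have PE j : P i j = eps i * V i j * eps j by exact: Deps_conj_mxE.
have [eps_i0|eps_i_neq0] := eqVneq (eps i) 0.
  have P_i0 j : P i j = 0 by rewrite PE eps_i0 !mul0r.
  rewrite big1 => [|j _]; last by rewrite P_i0 expr0n /= mulr0.
  by rewrite P_i0; lra.
have quartic := sym_idem_row_quartic_sum_le (@tr_weighted_hat _ _ _ Z eps)
  (weighted_hat_idem hinv) i.
apply: (le_leverage_poly (e := eps i ^+ 2)) quartic.
- by rewrite exprn_even_gt0.
- by rewrite PE; ring.
- by rewrite mulr_sumr; apply: eq_bigr => j _; rewrite !PE; ring.
Qed.
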